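(* (i) $\lim_{n\to\infty}\zeta^{\star}(2,\{1\}^n)=+\infty$. (ii) For integers $r\geq1$, $k_1\geq2$, $k_2,\ldots,k_r\geq1$, \[ \lim_{n\to\infty}\zeta^{\star}(k_1,\ldots,k_{r-1},k_r+1,\{1\}^n)=\zeta^{\star}(k_1,\ldots,k_{r-1},k_r),\qquad \lim_{n\to\infty}\zeta^{\star}(k_1,\ldots,k_{r-1},k_r,n)=\zeta^{\star}(k_1,\ldots,k_{r-1},k_r). \]
   Context: $\zeta^{\star}(k_1,\ldots,k_r)=\sum_{n_1\geq\cdots\geq n_r\geq 1}\frac{1}{n_1^{k_1}\cdots n_r^{k_r}}$ for $k_1\geq2$, $k_2,\ldots,k_r\geq1$; $\{1\}^n$ denotes $n$ consecutive arguments equal to $1$. *)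

From HB Require Import structures.
From mathcomp Require Import all_boot all_order all_algebra.
From mathcomp Require Import all_classical all_reals all_analysis.
Import numFieldNormedType.Exports.
Set Implicit Arguments. Unset Strict Implicit. Unset Printing Implicit Defensive.
Import Order.TTheory GRing.Theory Num.Theory.
Local Open Scope ring_scope.

(* Truncated multiple zeta-star sum:
   zstar_trunc N [:: k_1; ...; k_r]
     = \sum_{N >= n_1 >= n_2 >= ... >= n_r >= 1} 1/(n_1^k_1 ... n_r^k_r),
   with the empty product equal to 1. *)
Fixpoint zstar_trunc (R : realType) (N : nat) (ks : seq nat) : R :=
  match ks with
  | [::] => 1
  | k :: ks' => \sum_(1 <= m < N.+1) ((m%:R : R) ^+ k)^-1 * zstar_trunc R m ks'
  end.

Definition zeta_star (R : realType) (ks : seq nat) : R :=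
  limn (fun N => zstar_trunc R N ks).

Definition admissible (ks : seq nat) : bool :=
  match ks with
  | [::] => false
  | k1 :: rest => (2 <= k1)%N && all (fun k => (1 <= k)%N) rest
  end.

From HB Require Import structures.
From mathcomp Require Import all_boot all_order all_algebra.
From mathcomp Require Import all_classical all_reals all_analysis.
From mathcomp Require Import ring lra.
Import Order.TTheory GRing.Theory Num.Theory.
Import numFieldNormedType.Exports.
Local Open Scope ring_scope.
Local Open Scope classical_set_scope.

(* Write Z_N for the sums truncated at n_1 <= N.  For fixed N, letting the tail
   of the index vary, Z_j({1}^n) -> j (a monotone bounded limit pinned down by
   its recursion in j) and Z_j(n) -> 1; since Z_N is a finite nested sum, this
   gives Z_N(...,k_r+1,{1}^n) -> Z_N(...,k_r+1,0) = Z_N(...,k_r) and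
   Z_N(...,k_r,n) -> Z_N(...,k_r).  Hence liminf zeta* >= zeta*(...,k_r); for
   the index (1+1,{1}^n) the lower bounds Z_N(1) are harmonic numbers, giving (i).  The
   matching upper bounds zeta*(...,k_r+1,{1}^n) <= zeta*(...,k_r) (from
   Z_j({1}^n) <= j) and zeta*(...,k_r,n) <= (1 + 4/2^n) zeta*(...,k_r) hold
   termwise.  All series involved converge because Z_N(2,{1}^n) <= 2^(n+1). *)

Section ZetaStar.
Variable R : realType.
Local Notation Z := (zstar_trunc R).
Local Notation zeta := (zeta_star R).
Local Notation ones n := (nseq n 1%N).

Lemma zstar_truncS N k s :
  Z N.+1 (k :: s) = Z N (k :: s) + (N.+1%:R ^+ k)^-1 * Z N.+1 s.
Proof. by rewrite /= big_nat_recr. Qed.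

Lemma zstar_trunc0 k s : Z 0 (k :: s) = 0.
Proof. by rewrite /= big_geq. Qed.

Lemma zstar_trunc1 k s : Z 1 (k :: s) = Z 1 s.
Proof. by rewrite /= big_nat1 expr1n invr1 mul1r. Qed.

Lemma zstar_trunc_ge0 N s : 0 <= Z N s.
Proof.
elim: s N => [|k s IH] N /=; first exact: ler01.
by apply: sumr_ge0 => m _; rewrite mulr_ge0 ?invr_ge0 ?exprn_ge0.
Qed.

Lemma zstar_trunc_nondecreasing s : nondecreasing_seq (Z ^~ s).
Proof.
apply/nondecreasing_seqP => N; case: s => [|k s] //.
by rewrite zstar_truncS lerDl mulr_ge0 ?invr_ge0 ?exprn_ge0 ?zstar_trunc_ge0.
Qed.

Lemma zstar_trunc_cons_le (c : R) k a b N : 0 <= c ->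
  (forall j, (0 < j)%N -> Z j a <= c * Z j b) -> Z N (k :: a) <= c * Z N (k :: b).
Proof.
move=> c0 le_ab /=; rewrite mulr_sumr; apply: ler_sum_nat => j /andP[j_gt0 _].
by rewrite mulrCA ler_wpM2l ?invr_ge0 ?exprn_ge0 ?le_ab.
Qed.

Lemma zstar_trunc_cat_le (c : R) ks a b : 0 <= c ->
  (forall N, Z N a <= c * Z N b) -> forall N, Z N (ks ++ a) <= c * Z N (ks ++ b).
Proof.
move=> c0 le_ab; elim: ks => [|k ks IH] N //=.
by apply: zstar_trunc_cons_le => // j _; exact: IH.
Qed.

Lemma cvg_zstar_trunc_cons k (a : nat -> seq nat) b N :
  (forall j, (0 < j)%N -> (fun n => Z j (a n)) @ \oo --> Z j b) ->
  (fun n => Z N (k :: a n)) @ \oo --> Z N (k :: b).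
Proof.
move=> cvg_ab; elim: N => [|N IH].
  by under eq_cvg do rewrite zstar_trunc0; rewrite zstar_trunc0; exact: cvg_cst.
under eq_cvg do rewrite zstar_truncS; rewrite zstar_truncS.
by apply: cvgD => //; apply: cvgMl_tmp; exact: cvg_ab.
Qed.

Lemma cvg_zstar_trunc_cat ks (a : nat -> seq nat) b :
  (forall N, (fun n => Z N (a n)) @ \oo --> Z N b) ->
  forall N, (fun n => Z N (ks ++ a n)) @ \oo --> Z N (ks ++ b).
Proof.
move=> cvg_ab; elim: ks => [|k ks IH] N //=.
by apply: cvg_zstar_trunc_cons => j _; exact: IH.
Qed.

Lemma zstar_trunc_exponent_le s s' :
  all2 (fun a b => (b <= a)%N) s s' -> forall N, Z N s <= Z N s'.
Proof.
elim: s s' => [|k s IH] [|k' s'] //= /andP[le_k' le_s] N.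
apply: ler_sum_nat => m /andP[m_gt0 _].
rewrite ler_pM ?invr_ge0 ?exprn_ge0 ?zstar_trunc_ge0 ?IH //.
by rewrite lef_pV2 ?posrE ?exprn_gt0 ?ltr0n // ler_weXn2l ?ler1n.
Qed.

Lemma zstar_trunc_ones_1 n : Z 1 (ones n) = 1.
Proof. by elim: n => [|n IH] //; rewrite [ones _]/= zstar_trunc1. Qed.

Lemma zstar_trunc_onesS n j :
  Z j.+1 (ones n.+1) = Z j (ones n.+1) + Z j.+1 (ones n) / j.+1%:R.
Proof. by rewrite [ones _]/= zstar_truncS expr1 mulrC. Qed.

Lemma zstar_trunc_ones_le n j : (0 < j)%N -> Z j (ones n) <= j%:R.
Proof.
elim: n j => [|n IH] j j_gt0 /=; first by rewrite ler1n.
apply: le_trans (_ : \sum_(1 <= m < j.+1) 1 <= _); last first.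
  by rewrite sumr_const_nat subn1.
apply: ler_sum_nat => m /andP[m_gt0 _].
by rewrite expr1 mulrC ler_pdivrMr ?mul1r ?IH ?ltr0n.
Qed.

Lemma zstar_trunc_ones_leS n j : (0 < j)%N -> Z j (ones n) <= Z j (ones n.+1).
Proof.
elim: n j => [|n IH] j j_gt0.
  by have := zstar_trunc_nondecreasing [:: 1%N] 1 j j_gt0; rewrite zstar_trunc1.
rewrite -[Z j (ones n.+2)]mul1r; apply: zstar_trunc_cons_le => // m m_gt0.
by rewrite mul1r IH.
Qed.

(* The limit l_j exists by monotonicity, and passing to the limit in
   [zstar_trunc_onesS] gives l_(j+1) = l_j + l_(j+1) / (j+1). *)
Lemma cvg_zstar_trunc_ones j : (0 < j)%N ->
  (fun n => Z j (ones n)) @ \oo --> (j%:R : R).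
Proof.
elim: j => [//|[_ _|j IH _]].
  by under eq_cvg do rewrite zstar_trunc_ones_1; exact: cvg_cst.
set u := fun n => Z j.+2 (ones n).
have u_nd : nondecreasing_seq u.
  by apply/nondecreasing_seqP => n; exact: zstar_trunc_ones_leS.
have u_cvg : cvgn u.
  apply: nondecreasing_is_cvgn => //; exists j.+2%:R => _ [n _ <-].
  exact: zstar_trunc_ones_le.
have u_shift : (fun n => u n.+1) @ \oo --> j.+1%:R + limn u / j.+2%:R.
  rewrite /u; under eq_cvg do rewrite zstar_trunc_onesS.
  by apply: cvgD; [rewrite (cvg_shiftS (fun n => Z j.+1 (ones n))); exact: IH|
                   exact: cvgMr_tmp].
have lim_eq : limn u = j.+1%:R + limn u / j.+2%:R.
  have u_shift' : (fun n => u n.+1) @ \oo --> limn u.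
    by rewrite (cvg_shiftS u); exact: u_cvg.
  exact: (cvg_unique _ u_shift' u_shift).
suff -> : (j.+2%:R : R) = limn u by [].
move: lim_eq; rewrite -[j.+2]addn1 natrD; set a : R := j.+1%:R; set l := limn u.
have a_gt0 : 0 < a by rewrite ltr0n.
move=> lim_eq; have : l * (a + 1) = a * (a + 1) + l.
  by rewrite {1}lim_eq; field; rewrite gt_eqF ?ltr_wpDl.
by move=> ?; apply: (mulIf (lt0r_neq0 a_gt0)); lra.
Qed.

Lemma summation_by_parts_reciprocal (G : nat -> R) N :
  \sum_(1 <= m < N.+1) G m / (m%:R * m.+1%:R) + G N / N.+1%:R =
  G 0%N + \sum_(1 <= m < N.+1) (G m - G m.-1) / m%:R.
Proof.
elim: N => [|N IH]; first by rewrite !big_geq // add0r addr0 divr1.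
move/(canRL (addrK _)): IH => IH.
rewrite big_nat_recr //= [in RHS]big_nat_recr //= IH.
rewrite -[N.+2]addn1 natrD; move: (ltr0Sn R N); move: (N.+1%:R) => x x_gt0.
by field; rewrite !gt_eqF //; lra.
Qed.

Lemma inv_sqr_le (x : R) : 1 <= x -> (x ^+ 2)^-1 <= 2 / (x * (x + 1)).
Proof.
move=> x_ge1; have x_gt0 : 0 < x by lra.
rewrite -[2]invrK -invfM lef_pV2 ?posrE ?mulr_gt0 ?invr_gt0 ?exprn_gt0 //; last lra.
by rewrite ler_pdivrMl // expr2; nra.
Qed.

(* Summation by parts gives Z_N(2,{1}^(n+1)) <= 2 Z_N(2,{1}^n). *)
Lemma zstar_trunc_two_ones_le n N : Z N (2%N :: ones n) <= 2 ^+ n.+1.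
Proof.
pose G i m := Z m (ones i).
have le_parts i : Z N (2%N :: ones i) <=
    2 * (G i 0%N + \sum_(1 <= m < N.+1) (G i m - G i m.-1) / m%:R).
  rewrite -summation_by_parts_reciprocal.
  apply: (@le_trans _ _ (2 * \sum_(1 <= m < N.+1) G i m / (m%:R * m.+1%:R))).
    rewrite [Z N _]/= mulr_sumr; apply: ler_sum_nat => m /andP[m_gt0 _].
    rewrite mulrCA mulrC ler_wpM2l ?zstar_trunc_ge0 //.
    by rewrite -[m.+1]addn1 natrD inv_sqr_le ?ler1n.
  by rewrite ler_wpM2l ?lerDl ?divr_ge0 ?zstar_trunc_ge0.
elim: n => [|n IH]; apply: le_trans (le_parts _) _.
  by rewrite /G big1_seq /= ?addr0 ?mulr1 // => m _; rewrite subrr mul0r.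
suff -> : G n.+1 0%N + \sum_(1 <= m < N.+1) (G n.+1 m - G n.+1 m.-1) / m%:R =
          Z N (2%N :: ones n).
  by rewrite exprS ler_wpM2l.
rewrite /G [ones n.+1]/= zstar_trunc0 add0r [RHS]/=; apply: eq_big_nat => -[//|m] _.
by rewrite zstar_truncS /= addrC addKr expr1 mulrAC -invfM -expr2.
Qed.

Lemma zstar_trunc_admissible_le s : admissible s ->
  exists B, forall N, Z N s <= B.
Proof.
case: s => [//|k rest] /andP[k_ge2 rest_ge1].
exists (2 ^+ (size rest).+1) => N.
apply: le_trans (zstar_trunc_two_ones_le (size rest) N).
apply: zstar_trunc_exponent_le; rewrite /= k_ge2 /=.
by elim: rest rest_ge1 => [|k' rest IH] //= /andP[-> /IH].
Qed.

Section BoundedTruncations.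
Context {s : seq nat} {B : R}.
Hypothesis zstar_trunc_le : forall N, Z N s <= B.

Lemma cvg_zeta_star : Z ^~ s @ \oo --> zeta s.
Proof.
apply: nondecreasing_is_cvgn; first exact: zstar_trunc_nondecreasing.
by exists B => _ [N _ <-].
Qed.

Lemma zstar_trunc_le_zeta_star N : Z N s <= zeta s.
Proof.
apply: nondecreasing_cvgn_le; [exact: zstar_trunc_nondecreasing | exact: cvg_zeta_star].
Qed.

Lemma zeta_star_le : zeta s <= B.
Proof. by apply: limr_le; [exact: cvg_zeta_star | exact: nearW]. Qed.

End BoundedTruncations.

Lemma cvg_zeta_star_of_zstar_trunc (s : nat -> seq nat) t (b : nat -> R) B :
  (forall N, Z N t <= B) ->
  (forall N, (fun n => Z N (s n)) @ \oo --> Z N t) ->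
  (\forall n \near \oo, forall N, Z N (s n) <= b n) ->
  b @ \oo --> zeta t ->
  (fun n => zeta (s n)) @ \oo --> zeta t.
Proof.
move=> t_le cvg_st s_le cvg_b; apply/cvgrPdist_lt => e e_gt0.
have [N _ /(_ N (leqnn N)) zetaN] :
    \forall N \near \oo, zeta t - e < Z N t.
  by apply: cvgr_gt _ (cvg_zeta_star t_le) _ _; rewrite ltrBlDr ltrDl.
near=> n.
have sn_le : forall N, Z N (s n) <= b n by near: n.
have lower : zeta t - e < Z N (s n) by near: n; exact: cvgr_gt _ (cvg_st N) _ zetaN.
have upper : b n < zeta t + e by near: n; apply: cvgr_lt _ cvg_b _ _; rewrite ltrDl.
rewrite ltr_distlC (lt_le_trans lower (zstar_trunc_le_zeta_star sn_le N)).
by rewrite (le_lt_trans (zeta_star_le sn_le) upper).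
Unshelve. all: end_near.
Qed.

Lemma zstar_trunc_zero j : Z j [:: 0%N] = j%:R.
Proof.
by rewrite /=; under eq_bigr do rewrite expr0 invr1 mulr1; rewrite sumr_const_nat subn1.
Qed.

Lemma zstar_trunc_succ_zero k N : Z N [:: k.+1; 0%N] = Z N [:: k].
Proof.
apply: eq_big_nat => m /andP[m_gt0 _]; have /= -> := zstar_trunc_zero m.
by rewrite exprSr invfM -mulrA mulVf ?pnatr_eq0 -?lt0n.
Qed.

Lemma cvg_zstar_trunc_succ_ones k N :
  (fun n => Z N (k.+1 :: ones n)) @ \oo --> Z N [:: k].
Proof.
rewrite -zstar_trunc_succ_zero; apply: cvg_zstar_trunc_cons => j j_gt0.
by rewrite zstar_trunc_zero; exact: cvg_zstar_trunc_ones.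
Qed.

Lemma zstar_trunc_succ_ones_le k n N : Z N (k.+1 :: ones n) <= Z N [:: k].
Proof.
rewrite -zstar_trunc_succ_zero -[X in _ <= X]mul1r.
apply: zstar_trunc_cons_le => // j j_gt0.
by rewrite mul1r zstar_trunc_zero zstar_trunc_ones_le.
Qed.

Lemma zstar_trunc_single_le n j : (2 <= n)%N -> Z j [:: n] <= 1 + 4 * (2^-1) ^+ n.
Proof.
case: n => [|[|p]] // _.
have -> : 4 * (2^-1 : R) ^+ p.+2 = (2^-1) ^+ p by rewrite !exprS; field.
case: j => [|j]; first by rewrite zstar_trunc0 addr_ge0 ?exprn_ge0 ?invr_ge0.
have split_one q : Z j.+1 [:: q] = 1 + \sum_(2 <= m < j.+2) (m%:R ^+ q)^-1.
  by rewrite /= big_ltn // expr1n invr1 mulr1; under eq_bigr do rewrite mulr1.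
have := zstar_trunc_two_ones_le 0 j.+1; rewrite [Z _ _]split_one expr1 => sum_le.
rewrite split_one lerD2l.
apply: (@le_trans _ _ ((2^-1) ^+ p * \sum_(2 <= m < j.+2) (m%:R ^+ 2)^-1)).
  rewrite mulr_sumr; apply: ler_sum_nat => m /andP[m_ge2 _].
  rewrite -addn2 exprD invfM ler_wpM2r ?invr_ge0 ?exprn_ge0 // -exprVn.
  apply: lerXn2r; rewrite ?nnegrE ?invr_ge0 //.
  by rewrite lef_pV2 ?posrE ?ler_nat ?ltr0n // (leq_trans _ m_ge2).
by rewrite ler_piMr ?exprn_ge0 ?invr_ge0 //; lra.
Qed.

Lemma cvg_one_add_geometric : (fun n => 1 + 4 * (2^-1) ^+ n) @ \oo --> (1 : R).
Proof.
rewrite -[X in _ --> X]addr0 -[X in _ + X](mulr0 4).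
apply: cvgD; first exact: cvg_cst.
by apply: cvgMl_tmp; apply: cvg_expr; rewrite ger0_norm; lra.
Qed.

Lemma cvg_zstar_trunc_single j : (0 < j)%N -> (fun n => Z j [:: n]) @ \oo --> (1 : R).
Proof.
move=> j_gt0; apply: squeeze_cvgr (cvg_cst (1 : R)) cvg_one_add_geometric.
apply: filterS (nbhs_infty_ge 2) => n n_ge2.
rewrite zstar_trunc_single_le // andbT.
by have := zstar_trunc_nondecreasing [:: n] 1 j j_gt0; rewrite zstar_trunc1.
Qed.

Lemma zstar_trunc_one N : Z N [:: 1%N] = series (@harmonic R) N.
Proof.
elim: N => [|N IH]; first by rewrite zstar_trunc0 /series /= big_geq.
by rewrite zstar_truncS IH /series /= big_nat_recr //= expr1 mulr1.
Qed.

Lemma zeta_star_two_ones_cvgy : (fun n => zeta (2%N :: ones n)) @ \oo --> +oo.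
Proof.
have harmonic_cvgy : series (@harmonic R) @ \oo --> +oo.
  apply: nondecreasing_dvgn_lt (@dvg_harmonic R).
  by apply: nondecreasing_series => n _ _; exact: harmonic_ge0.
apply/cvgryPge => A.
have [M _ /(_ M (leqnn M)) A_lt] := (cvgryPgt _).1 harmonic_cvgy A.
rewrite -zstar_trunc_one in A_lt.
near=> n.
have [B B_le] : exists B, forall N, Z N (2%N :: ones n) <= B.
  by apply: zstar_trunc_admissible_le; rewrite /admissible /= all_nseq orbT.
have A_lt_n : A < Z M (2%N :: ones n).
  by near: n; exact: cvgr_gt _ (cvg_zstar_trunc_succ_ones 1 M) _ A_lt.
exact/ltW/(lt_le_trans A_lt_n)/zstar_trunc_le_zeta_star.
Unshelve. all: end_near.
Qed.

Lemma cvg_zeta_star_succ_ones ks k : admissible (rcons ks k) ->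
  (fun n => zeta (rcons ks k.+1 ++ ones n)) @ \oo --> zeta (rcons ks k).
Proof.
move=> /zstar_trunc_admissible_le[B B_le].
apply: (@cvg_zeta_star_of_zstar_trunc (fun n => rcons ks k.+1 ++ ones n) _
  (fun=> zeta (rcons ks k)) _ B_le).
- move=> N; under eq_cvg do rewrite cat_rcons; rewrite -cats1.
  apply: (@cvg_zstar_trunc_cat ks (fun n => k.+1 :: ones n)).
  exact: cvg_zstar_trunc_succ_ones.
- apply: nearW => n N; apply: le_trans (zstar_trunc_le_zeta_star B_le N).
  rewrite cat_rcons -cats1 -[X in _ <= X]mul1r.
  by apply: zstar_trunc_cat_le => // M; rewrite mul1r zstar_trunc_succ_ones_le.
- exact: cvg_cst.
Qed.

Lemma cvg_zeta_star_rcons ks k : admissible (rcons ks k) ->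
  (fun n => zeta (rcons (rcons ks k) n)) @ \oo --> zeta (rcons ks k).
Proof.
move=> /zstar_trunc_admissible_le[B B_le].
pose b n := (1 + 4 * (2^-1) ^+ n) * zeta (rcons ks k).
apply: (@cvg_zeta_star_of_zstar_trunc (rcons (rcons ks k)) _ b _ B_le).
- move=> N; under eq_cvg do rewrite -2!cats1 -catA; rewrite -cats1.
  apply: (@cvg_zstar_trunc_cat ks (fun n => [:: k; n])) => M.
  apply: (@cvg_zstar_trunc_cons k (fun n => [:: n])) => j j_gt0.
  exact: cvg_zstar_trunc_single.
- apply: filterS (nbhs_infty_ge 2) => n n_ge2 N.
  have c_ge0 : 0 <= 1 + 4 * (2^-1 : R) ^+ n.
    by rewrite addr_ge0 ?mulr_ge0 ?exprn_ge0 ?invr_ge0.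
  apply: le_trans (ler_wpM2l c_ge0 (zstar_trunc_le_zeta_star B_le N)).
  rewrite -2!cats1 -catA; apply: zstar_trunc_cat_le => // M.
  apply: zstar_trunc_cons_le => // j _.
  by rewrite mulr1 zstar_trunc_single_le.
- by rewrite -[X in _ --> X]mul1r; apply: cvgMr_tmp; exact: cvg_one_add_geometric.
Qed.

End ZetaStar.

Theorem lemma3p4 (R : realType) :
  ((fun n : nat => zeta_star R (2%N :: nseq n 1%N)) @ \oo --> +oo) /\
  (forall (ks : seq nat) (kr : nat), admissible (rcons ks kr) ->
     ((fun n : nat => zeta_star R (rcons ks kr.+1 ++ nseq n 1%N)) @ \oo
        --> zeta_star R (rcons ks kr)) /\
     ((fun n : nat => zeta_star R (rcons (rcons ks kr) n)) @ \oo
        --> zeta_star R (rcons ks kr))).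
Proof.
split; first exact: zeta_star_two_ones_cvgy.
by move=> ks kr adm; split; [exact: cvg_zeta_star_succ_ones | exact: cvg_zeta_star_rcons].
Qed.
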